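(* Let $\mathcal H=(M,n,\mathcal R)$ be a BMS. Then for every vector $v\in\mathbb R^n$ there is a mode $m\in M$ with $v\cdot r\ge 0$ for all $r\in\mathcal R(m)$ if and only if $\mathcal H$ is safe.
   Context: A multi-mode system is a tuple $\mathcal H=(M,n,\mathcal R)$ with $M$ a finite nonempty set of modes, $n\ge1$ variables, and $\mathcal R:M\to 2^{\mathbb R^n}$ giving nonempty rate sets; it is a BMS if each $\mathcal R(m)$ is a bounded convex polytope, and a CMS (constant-rate) if each $\mathcal R(m)$ is a singleton. An instance of a multi-mode system $(M,n,\mathcal R)$ is a CMS $(M,n,R)$ with $R(m)\in\mathcal R(m)$ for every $m$ (writing $R(m)$ for the single rate). A CMS $(M,n,R)$ is safe if there are $t_m\ge0$ ($m\in M$) with $\sum_{m\in M}t_m=1$ and $\sum_{m\in M}t_m R(m)=\vec 0$. The extreme-rate system $\mathrm{Ext}(\mathcal H)$ of a BMS $\mathcal H=(M,n,\mathcal R)$ is $(M,n,\mathcal R')$ with $\mathcal R'(m)$ the (finite) set of vertices of $\mathcal R(m)$. A BMS $\mathcal H$ is safe if every instance of $\mathrm{Ext}(\mathcal H)$ is safe. *)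

(* the statement is purely order-theoretic/linear-algebraic,
   so it is stated over an arbitrary real field F (R is an instance). *)
From HB Require Import structures.
From mathcomp Require Import all_boot all_order all_algebra.
Set Implicit Arguments. Unset Strict Implicit. Unset Printing Implicit Defensive.
Import Order.TTheory GRing.Theory Num.Theory.
Local Open Scope ring_scope.

Definition dot (F : realFieldType) (n : nat) (v r : 'rV[F]_n) : F :=
  \sum_(i < n) v 0 i * r 0 i.

Definition in_conv (F : realFieldType) (n : nat) (s : seq 'rV[F]_n) (x : 'rV[F]_n) : Prop :=
  exists w : 'I_(size s) -> F,
    (forall i, 0 <= w i) /\ \sum_i w i = 1 /\
    x = \sum_i w i *: nth 0 s i.

Definition is_polytope (F : realFieldType) (n : nat) (S : 'rV[F]_n -> Prop) : Prop :=
  exists s : seq 'rV[F]_n, s <> [::] /\ forall x, S x <-> in_conv s x.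

Definition is_vertex (F : realFieldType) (n : nat) (S : 'rV[F]_n -> Prop) (p : 'rV[F]_n) : Prop :=
  S p /\ forall (x y : 'rV[F]_n) (t : F), S x -> S y -> 0 < t < 1 ->
    p = t *: x + (1 - t) *: y -> x = y.

Definition cms_safe (F : realFieldType) (M : finType) (n : nat) (R : M -> 'rV[F]_n) : Prop :=
  exists t : M -> F, (forall m, 0 <= t m) /\ \sum_m t m = 1 /\ \sum_m t m *: R m = 0.

(* A BMS (M, n, RR) is safe: every instance of Ext(H) (a choice of a vertex
   of RR m for each mode m) is a safe CMS. *)
Definition bms_safe (F : realFieldType) (M : finType) (n : nat) (RR : M -> 'rV[F]_n -> Prop) : Prop :=
  forall R : M -> 'rV[F]_n, (forall m, is_vertex (RR m) (R m)) -> cms_safe R.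

(* (=>) Fix a choice of vertices R m.  By Gordan's alternative, either some
   convex combination of the R m vanishes (the CMS is safe) or some v is
   strictly negative on all of them, which the hypothesis forbids.  Gordan's
   alternative is proved by Fourier-Motzkin elimination: a positively
   independent family of vectors keeps this property when one coordinate is
   eliminated by combining vectors of opposite signs in that coordinate, and a
   direction negative on the eliminated family lifts back by choosing that
   coordinate between finitely many strict bounds.

   (<=) If every mode has a rate r with v . r < 0, it also has such a vertex:
   the point of a spanning list that is lexicographically minimal for v and
   then for the coordinates is a vertex.  A convex combination of these
   vertices with v-values all negative cannot vanish, so the instance built
   from them is unsafe. *)

From Stdlib Require Import Classical IndefiniteDescription.
From HB Require Import structures.
From mathcomp Require Import all_boot all_order all_algebra.
From mathcomp Require Import ring lra zify.
Import Order.TTheory GRing.Theory Num.Theory.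
Local Open Scope ring_scope.

Section DotProduct.
Context {F : realFieldType} {n : nat}.
Implicit Types (v x y : 'rV[F]_n).

Lemma dotD v x y : dot v (x + y) = dot v x + dot v y.
Proof. by rewrite /dot -big_split; apply: eq_bigr => j _; rewrite !mxE mulrDr. Qed.

Lemma dotZ v (c : F) x : dot v (c *: x) = c * dot v x.
Proof. by rewrite /dot mulr_sumr; apply: eq_bigr => j _; rewrite mxE mulrCA. Qed.

Lemma dotDl v y x : dot (v + y) x = dot v x + dot y x.
Proof. by rewrite /dot -big_split; apply: eq_bigr => j _; rewrite !mxE mulrDl. Qed.

Lemma dotZl (c : F) v x : dot (c *: v) x = c * dot v x.
Proof. by rewrite /dot mulr_sumr; apply: eq_bigr => j _; rewrite mxE mulrA. Qed.

Lemma dot0 v : dot v 0 = 0.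
Proof. by rewrite /dot big1 // => j _; rewrite mxE mulr0. Qed.

Lemma dot_delta (k : 'I_n) x : dot (delta_mx 0 k) x = x 0 k.
Proof.
rewrite /dot (bigD1 k) //= mxE !eqxx mul1r big1 ?addr0 // => j hj.
by rewrite mxE (negbTE hj) andbF mul0r.
Qed.

Lemma dot_comb (I : finType) v (c : I -> F) (x : I -> 'rV[F]_n) :
  dot v (\sum_i c i *: x i) = \sum_i c i * dot v (x i).
Proof.
rewrite /dot; under eq_bigr do rewrite summxE mulr_sumr.
rewrite exchange_big /=; apply: eq_bigr => i _.
by rewrite mulr_sumr; apply: eq_bigr => j _; rewrite mxE mulrCA.
Qed.

End DotProduct.

Lemma finite_separation {F : realFieldType} {I : finType} {A B : pred I} {L U : I -> F} :
  (forall i j, A i -> B j -> L i < U j) ->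
  exists c, (forall i, A i -> L i < c) /\ (forall j, B j -> c < U j).
Proof.
move=> hLU.
have [i0 Ai0 | noA] := pickP A; have [j0 Bj0 | noB] := pickP B.
- have [i Ai maxi] := arg_maxP L Ai0; have [j Bj minj] := arg_minP U Bj0.
  have hij := hLU _ _ Ai Bj.
  exists ((L i + U j) / 2); split=> [k Ak | k Bk].
  + by move: (maxi _ Ak) => /=; lra.
  + by move: (minj _ Bk) => /=; lra.
- have [i Ai maxi] := arg_maxP L Ai0.
  exists (L i + 1); split=> [k Ak | k]; last by rewrite noB.
  by move: (maxi _ Ak) => /=; lra.
- have [j Bj minj] := arg_minP U Bj0.
  exists (U j - 1); split=> [k | k Bk]; first by rewrite noA.
  by move: (minj _ Bk) => /=; lra.
- by exists 0; split=> k; rewrite ?noA ?noB.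
Qed.

Lemma convex_comb_lt0 {F : realFieldType} {I : finType} {t x : I -> F} :
  (forall i, 0 <= t i) -> \sum_i t i = 1 -> (forall i, x i < 0) ->
  \sum_i t i * x i < 0.
Proof.
move=> t0 t1 xneg.
have [i /andP[_ ti]] : exists i, true && (0 < t i).
  by apply: psumr_neq0P => [j _ //|]; rewrite t1; apply/eqP/oner_neq0.
rewrite (bigD1 i) //= -[ltRHS](addr0 0) ltr_leD ?pmulr_rlt0 //.
by apply: sumr_le0 => j _; rewrite mulr_ge0_le0 // ltW.
Qed.

Lemma sum_pairs_regroup (R : ringType) (V : lmodType R) (I : finType)
    (t u w : I * I -> R) (a : I -> V) :
  \sum_p t p *: (u p *: a p.1 + w p *: a p.2) =
  \sum_i (\sum_j t (i, j) * u (i, j) + \sum_j t (j, i) * w (j, i)) *: a i.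
Proof.
under eq_bigr do rewrite scalerDr !scalerA.
under [RHS]eq_bigr do rewrite scalerDl !scaler_suml.
rewrite !big_split /=; congr (_ + _).
  by rewrite pair_bigA; apply: eq_bigr => -[].
by rewrite exchange_big pair_bigA; apply: eq_bigr => -[].
Qed.

Section FourierMotzkin.
Context {F : realFieldType} {n : nat}.

Definition pos_indep {I : finType} (P : pred I) (a : I -> 'rV[F]_n) : Prop :=
  forall t : I -> F, (forall i, 0 <= t i) -> (forall i, ~~ P i -> t i = 0) ->
  \sum_i t i *: a i = 0 -> forall i, t i = 0.

Section Elimination.
Context {I : finType} (P : pred I) (a : I -> 'rV[F]_n) (k : 'I_n).

Let pos i := P i && (0 < a i 0 k).
Let neg i := P i && (a i 0 k < 0).
Let cross (p : I * I) := pos p.1 && neg p.2.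

Definition elim_pair (p : I * I) : bool :=
  cross p || [&& p.1 == p.2, P p.1 & a p.1 0 k == 0].

Let lcoef (p : I * I) := if cross p then - a p.2 0 k else 1.
Let rcoef (p : I * I) := if cross p then a p.1 0 k else 0.

Definition elim_vec (p : I * I) : 'rV[F]_n := lcoef p *: a p.1 + rcoef p *: a p.2.

Lemma lcoef_gt0 p : 0 < lcoef p.
Proof. by rewrite /lcoef; case: ifP => [/andP[_ /andP[_]]|_]; rewrite ?oppr_gt0. Qed.

Lemma lcoef_ge0 p : 0 <= lcoef p.
Proof. exact/ltW/lcoef_gt0. Qed.

Lemma rcoef_ge0 p : 0 <= rcoef p.
Proof. by rewrite /rcoef; case: ifP => [/andP[/andP[_ /ltW]]|_]. Qed.

Lemma elim_pair_cross {i j} : pos i -> neg j -> elim_pair (i, j).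
Proof. by move=> pi nj; rewrite /elim_pair /cross /= pi nj. Qed.

Lemma elim_vec_cross i j :
  pos i -> neg j -> elim_vec (i, j) = - a j 0 k *: a i + a i 0 k *: a j.
Proof. by move=> pi nj; rewrite /elim_vec /lcoef /rcoef /cross /= pi nj. Qed.

Lemma elim_pair_diag {i} : P i -> a i 0 k = 0 -> elim_pair (i, i).
Proof. by move=> Pi aik; rewrite /elim_pair /= eqxx Pi aik eqxx orbT. Qed.

Lemma elim_vec_diag i : a i 0 k = 0 -> elim_vec (i, i) = a i.
Proof.
move=> aik; rewrite /elim_vec /lcoef /rcoef /cross /pos /= aik ltxx !andbF /=.
by rewrite scale1r scale0r addr0.
Qed.

Lemma elim_pair_P p : elim_pair p -> P p.1 && P p.2.
Proof.
case/orP=> [/andP[/andP[-> _] /andP[-> _]] //|/and3P[/eqP <- Pp _]].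
by rewrite Pp.
Qed.

Lemma elim_vec_coord p j : elim_vec p 0 j = lcoef p * a p.1 0 j + rcoef p * a p.2 0 j.
Proof. by rewrite !mxE. Qed.

Lemma elim_vec_k p : elim_pair p -> elim_vec p 0 k = 0.
Proof.
rewrite elim_vec_coord /lcoef /rcoef.
case/orP=> [-> | /and3P[/eqP <- _ /eqP ->]]; first by rewrite mulNr mulrC addNr.
by case: ifP; rewrite ?mulr0 ?add0r ?addr0.
Qed.

(* Positive independence survives the elimination, since a vanishing
   combination of the [elim_vec p] regroups into one of the [a i] whose
   coefficients dominate those of the pairs. *)
Lemma elim_pos_indep : pos_indep P a -> pos_indep elim_pair elim_vec.
Proof.
move=> indep t t0 tQ tsum.
pose c i := \sum_j t (i, j) * lcoef (i, j) + \sum_j t (j, i) * rcoef (j, i).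
have tP i j : ~~ P i || ~~ P j -> t (i, j) = 0.
  move=> nP; apply: tQ; apply: contraTN nP => /elim_pair_P /=.
  by rewrite negb_or !negbK.
have tl_ge0 i j : 0 <= t (i, j) * lcoef (i, j) := mulr_ge0 (t0 _) (lcoef_ge0 _).
have tr_ge0 i j : 0 <= t (j, i) * rcoef (j, i) := mulr_ge0 (t0 _) (rcoef_ge0 _).
have c0 i : 0 <= c i by rewrite addr_ge0 ?sumr_ge0.
have cP i : ~~ P i -> c i = 0.
  by move=> nPi; rewrite /c !big1 ?addr0 // => j _; rewrite tP ?nPi ?orbT ?mul0r.
have csum : \sum_i c i *: a i = 0.
  by rewrite -[in RHS]tsum /elim_vec sum_pairs_regroup.
move=> [i j]; have /eqP := indep c c0 cP csum i.
rewrite paddr_eq0 ?sumr_ge0 // => /andP[/eqP ci _].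
have /(_ j isT)/eqP := psumr_eq0P (fun l _ => tl_ge0 i l) ci.
by rewrite mulf_eq0 (gt_eqF (lcoef_gt0 _)) orbF => /eqP.
Qed.

(* A direction strictly negative on the eliminated family lifts, by adjusting
   its [k]-th coordinate, to one strictly negative on the original family: the
   admissible values of that coordinate form an interval, nonempty because each
   crossing pair is negative. *)
Lemma elim_lift (v' : 'rV[F]_n) :
  (forall p, elim_pair p -> dot v' (elim_vec p) < 0) ->
  exists v, forall i, P i -> dot v (a i) < 0.
Proof.
move=> hv'.
pose L i := - dot v' (a i) / a i 0 k.
have hLU j i : neg j -> pos i -> L j < L i.
  move=> nj pi; have := hv' _ (elim_pair_cross pi nj).
  rewrite elim_vec_cross // dotD !dotZ.
  move: pi nj => /andP[_ ai] /andP[_ aj].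
  by rewrite /L ltr_ndivrMr // mulrAC ltr_pdivrMr //; nra.
have [c [cneg cpos]] := finite_separation hLU.
exists (v' + c *: delta_mx 0 k) => i Pi; rewrite dotDl dotZl dot_delta.
case: (ltrgtP (a i 0 k) 0) => aik.
- by have := cneg i; rewrite /neg Pi aik /L ltr_ndivrMr // => /(_ isT); lra.
- by have := cpos i; rewrite /pos Pi aik /L ltr_pdivlMr // => /(_ isT); lra.
- by have := hv' _ (elim_pair_diag Pi aik); rewrite elim_vec_diag // aik mulr0 addr0.
Qed.

End Elimination.

(* Fourier-Motzkin elimination, by induction on the number [d] of possibly
   nonzero leading coordinates: a positively independent family has a
   direction on which all its vectors are strictly negative. *)
Lemma pos_indep_neg_direction {d : nat} {I : finType} {P : pred I} {a : I -> 'rV[F]_n} :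
  (forall i (j : 'I_n), P i -> (d <= j)%N -> a i 0 j = 0) -> pos_indep P a ->
  exists v, forall i, P i -> dot v (a i) < 0.
Proof.
elim: d I P a => [|d IH] I P a zero indep.
  exists 0 => i Pi; exfalso.
  have ai0 : a i = 0 by apply/rowP => j; rewrite mxE zero.
  have : ((i == i)%:R : F) = 0.
    apply: (indep (fun j => (j == i)%:R)) => [j|j|]; first by rewrite ler0n.
      by case: eqP => // ->; rewrite Pi.
    by apply: big1 => j _; case: eqP => [->|_]; rewrite ?ai0 ?scaler0 ?scale0r.
  by rewrite eqxx => /eqP; rewrite oner_eq0.
have [dn | nd] := ltnP d n; last first.
  by apply: IH indep => i j Pi dj; have := ltn_ord j; lia.
pose k := Ordinal dn.
have elim_zero p (j : 'I_n) : elim_pair P a k p -> (d <= j)%N -> elim_vec P a k p 0 j = 0.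
  move=> /[dup] Qp /elim_pair_P /andP[P1 P2] dj.
  have [dj' | jd] := ltnP d j.
    by rewrite elim_vec_coord (zero _ j P1 dj') (zero _ j P2 dj') !mulr0 addr0.
  by rewrite (_ : j = k) ?elim_vec_k //; apply: val_inj => /=; lia.
have [v' hv'] := IH _ _ _ elim_zero (elim_pos_indep P a k indep).
exact: elim_lift hv'.
Qed.

Lemma gordan {I : finType} {a : I -> 'rV[F]_n} :
  ~ cms_safe a -> exists v, forall i, dot v (a i) < 0.
Proof.
move=> unsafe.
have indep : pos_indep predT a.
  move=> t t0 _ tsum i; have [s0 | s0] := eqVneq (\sum_j t j) 0.
    exact: psumr_eq0P s0 i isT.
  exfalso; apply: unsafe; exists (fun j => t j / \sum_j t j); split.
    by move=> j; rewrite divr_ge0 ?sumr_ge0.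
  split; first by rewrite -mulr_suml mulfV.
  by under eq_bigr do rewrite mulrC -scalerA; rewrite -scaler_sumr tsum scaler0.
have no_coord i (j : 'I_n) : predT i -> (n <= j)%N -> a i 0 j = 0.
  by have := ltn_ord j; lia.
have [v hv] := pos_indep_neg_direction no_coord indep.
by exists v => i; apply: hv.
Qed.

End FourierMotzkin.

Section LexMin.
Context {F : realFieldType} {n N : nat} (pts : 'I_N -> 'rV[F]_n).

Fixpoint lexmin (fs : seq 'rV[F]_n) (A : pred 'I_N) (p : 'I_N) : Prop :=
  if fs is f :: fs' then
    (forall i, A i -> dot f (pts p) <= dot f (pts i)) /\
    lexmin fs' [pred i | A i && (dot f (pts i) == dot f (pts p))] p
  else True.

Lemma lexmin_ext fs (A B : pred 'I_N) p : A =1 B -> lexmin fs A p -> lexmin fs B p.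
Proof.
elim: fs A B => [//|f fs IH] A B AB /= [minp hp]; split.
  by move=> i; rewrite -AB; apply: minp.
by apply: IH hp => i /=; rewrite AB.
Qed.

Lemma lexmin_exists fs (A : pred 'I_N) p0 : A p0 -> exists p, A p /\ lexmin fs A p.
Proof.
elim: fs A p0 => [|f fs IH] A p0 Ap0; first by exists p0.
have [p1 Ap1 minp1] := arg_minP (fun i => dot f (pts i)) Ap0.
pose A1 := [pred i | A i && (dot f (pts i) == dot f (pts p1))].
have [p [/andP[Ap /eqP fp] hp]] : exists p, A1 p /\ lexmin fs A1 p.
  by apply: (IH A1 p1); rewrite /= Ap1 eqxx.
exists p; split => //=; split.
  by move=> i Ai; rewrite fp; apply: minp1.
by apply: lexmin_ext hp => i /=; rewrite fp.
Qed.

Definition weights_on (w : 'I_N -> F) (A : pred 'I_N) : Prop :=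
  [/\ forall i, 0 <= w i, \sum_i w i = 1 & forall i, w i != 0 -> A i].

Section Excess.
Context {f : 'rV[F]_n} {m : F} {w : 'I_N -> F} {A : pred 'I_N}.
Hypotheses (hw : weights_on w A) (lb : forall i, A i -> m <= dot f (pts i)).

Lemma comb_excess : dot f (\sum_i w i *: pts i) - m = \sum_i w i * (dot f (pts i) - m).
Proof.
case: hw => _ w1 _; under [RHS]eq_bigr do rewrite mulrBr.
by rewrite sumrB -mulr_suml w1 mul1r dot_comb.
Qed.

Lemma weighted_excess_ge0 i : 0 <= w i * (dot f (pts i) - m).
Proof.
case: hw => w0 _ wA; have [->|wi] := eqVneq (w i) 0; first by rewrite mul0r.
by rewrite mulr_ge0 // subr_ge0 lb // wA.
Qed.

Lemma comb_lower : m <= dot f (\sum_i w i *: pts i).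
Proof. by rewrite -subr_ge0 comb_excess sumr_ge0 // => i _; exact: weighted_excess_ge0. Qed.

Lemma tight_support : dot f (\sum_i w i *: pts i) <= m ->
  weights_on w [pred i | A i && (dot f (pts i) == m)].
Proof.
move=> ub; case: (hw) => w0 w1 wA; split=> // i wi /=; rewrite wA //=.
have ex0 : \sum_i w i * (dot f (pts i) - m) = 0.
  by rewrite -comb_excess; apply/eqP; rewrite eq_le subr_le0 ub subr_ge0 comb_lower.
have /(_ i isT)/eqP := psumr_eq0P (fun i _ => weighted_excess_ge0 i) ex0.
by rewrite mulf_eq0 (negbTE wi) subr_eq0.
Qed.

End Excess.

Lemma lexmin_step {f} {A : pred 'I_N} {p wx wy t} :
  (forall i, A i -> dot f (pts p) <= dot f (pts i)) ->
  weights_on wx A -> weights_on wy A -> 0 < t < 1 ->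
  pts p = t *: (\sum_i wx i *: pts i) + (1 - t) *: (\sum_i wy i *: pts i) ->
  weights_on wx [pred i | A i && (dot f (pts i) == dot f (pts p))] /\
  weights_on wy [pred i | A i && (dot f (pts i) == dot f (pts p))].
Proof.
move=> minp hx hy /andP[t0 t1] hp.
have lx := comb_lower hx minp; have ly := comb_lower hy minp.
have fp : dot f (pts p) = t * dot f (\sum_i wx i *: pts i) +
                          (1 - t) * dot f (\sum_i wy i *: pts i).
  by rewrite {1}hp dotD !dotZ.
split; apply: tight_support => //; nra.
Qed.

Lemma lexmin_face {fs} {A : pred 'I_N} {p wx wy t} :
  lexmin fs A p -> weights_on wx A -> weights_on wy A -> 0 < t < 1 ->
  pts p = t *: (\sum_i wx i *: pts i) + (1 - t) *: (\sum_i wy i *: pts i) ->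
  forall i, wx i != 0 -> all (fun f => dot f (pts i) == dot f (pts p)) fs.
Proof.
elim: fs A wx wy => [//|f fs IH] A wx wy /= [minp hp] hx hy ht hpt i wi.
have [hx' hy'] := lexmin_step minp hx hy ht hpt.
rewrite (IH _ _ _ hp hx' hy' ht hpt i wi) andbT.
by case: hx' => _ _ /(_ i wi) /andP[].
Qed.

End LexMin.

Section Vertices.
Context {F : realFieldType} {n : nat}.

Definition coord_functionals : seq 'rV[F]_n := [seq delta_mx 0 j | j <- enum 'I_n].

Lemma coord_functionals_eq (x y : 'rV[F]_n) :
  all (fun f => dot f x == dot f y) coord_functionals -> x = y.
Proof.
move=> /allP agree; apply/rowP => j.
by have /eqP := agree _ (map_f _ (mem_enum _ j)); rewrite !dot_delta.
Qed.

Lemma comb_const {N : nat} (w : 'I_N -> F) (pts : 'I_N -> 'rV[F]_n) q :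
  \sum_i w i = 1 -> (forall i, w i != 0 -> pts i = q) -> \sum_i w i *: pts i = q.
Proof.
move=> w1 hq; rewrite -[RHS]scale1r -w1 scaler_suml; apply: eq_bigr => i _.
by have [->|/hq ->] := eqVneq (w i) 0; rewrite ?scale0r.
Qed.

Lemma lexmin_vertex (S : 'rV[F]_n -> Prop) (s : seq 'rV[F]_n) v (p : 'I_(size s)) :
  (forall x, S x <-> in_conv s x) ->
  lexmin (fun i : 'I_(size s) => nth 0 s i) (v :: coord_functionals) predT p ->
  is_vertex S (nth 0 s p).
Proof.
set pt := fun i : 'I_(size s) => nth 0 s i => hS hlex; split.
  apply/hS; exists (fun i => (i == p)%:R); split=> [i|]; first by rewrite ler0n.
  split; first by rewrite (bigD1 p) //= eqxx big1 ?addr0 // => i /negbTE ->.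
  by rewrite (bigD1 p) //= eqxx scale1r big1 ?addr0 // => i /negbTE ->; rewrite scale0r.
move=> x y t /hS[wx [wx0 [wx1 ->]]] /hS[wy [wy0 [wy1 ->]]] ht hp.
have hx : weights_on wx predT by split.
have hy : weights_on wy predT by split.
have ht' : 0 < 1 - t < 1 by move: ht => /andP[t0 t1]; apply/andP; split; lra.
have hp' : pt p = (1 - t) *: (\sum_i wy i *: pt i) + (1 - (1 - t)) *: (\sum_i wx i *: pt i).
  have -> : 1 - (1 - t) = t by ring.
  by rewrite addrC.
have at_p (w : 'I_(size s) -> F) : \sum_i w i = 1 ->
    (forall i, w i != 0 -> all (fun f => dot f (pt i) == dot f (pt p)) (v :: coord_functionals)) ->
    \sum_i w i *: pt i = pt p.
  by move=> w1 face; apply: comb_const => // i /face /andP[_ /coord_functionals_eq].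
rewrite (at_p wx wx1 (lexmin_face pt hlex hx hy ht hp)).
by rewrite (at_p wy wy1 (lexmin_face pt hlex hy hx ht' hp')).
Qed.

(* A polytope containing a point on which [v] is negative has a vertex on
   which [v] is negative: take the lexicographic minimiser of [v]. *)
Lemma vertex_below (S : 'rV[F]_n -> Prop) v r :
  is_polytope S -> S r -> dot v r < 0 -> exists p, is_vertex S p /\ dot v p < 0.
Proof.
move=> [s [s_ne hS]] /hS[w [w0 [w1 ->]]] vr.
have s_gt0 : (0 < size s)%N by rewrite lt0n size_eq0; apply/eqP.
have [p [_ hlex]] := lexmin_exists (fun i : 'I_(size s) => nth 0 s i)
  (v :: coord_functionals) predT (Ordinal s_gt0) isT.
exists (nth 0 s p); split; first exact: lexmin_vertex hS hlex.
have hw : weights_on w predT by split.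
exact: le_lt_trans (comb_lower _ hw hlex.1) vr.
Qed.

End Vertices.

Theorem lemma2 (F : realFieldType) (M : finType) (n : nat)
  (RR : M -> 'rV[F]_n -> Prop)
  (hn : (0 < n)%N) (hM : (0 < #|M|)%N)
  (hpoly : forall m, is_polytope (RR m)) :
  (forall v : 'rV[F]_n, exists m : M, forall r, RR m r -> 0 <= dot v r)
  <-> bms_safe RR.
Proof.
split=> [cover R vertR | safe v].
  apply: NNPP => unsafe.
  have [v vneg] := gordan unsafe.
  have [m hm] := cover v.
  by have := hm _ (vertR m).1; rewrite leNgt vneg.
apply: NNPP => no_mode.
have below m : exists p, is_vertex (RR m) p /\ dot v p < 0.
  have [r [Rr vr]] : exists r, RR m r /\ dot v r < 0.
    apply: NNPP => no_r; apply: no_mode; exists m => r Rr.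
    by rewrite leNgt; apply/negP => vr; apply: no_r; exists r.
  exact: vertex_below (hpoly m) Rr vr.
have [R hR] := functional_choice _ below.
have [t [t0 [t1 tR]]] := safe R (fun m => (hR m).1).
have := convex_comb_lt0 t0 t1 (fun m => (hR m).2).
by rewrite -dot_comb tR dot0 ltxx.
Qed.
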